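(* Let $A$ be a setoid, $B$ a setoid family over $A$ and $(C,a_C)$ a $P_B$-algebra. For every $F:\mathsf{RFam}$ and every $w:W$, the function $(a_C\circ(\mathsf{cmprh}\,F))\circ m_w:\mathsf{ImS}\,w\Rightarrow C$ is recursively defined, i.e. $\mathsf{RecDef}\,w\,((a_C\circ(\mathsf{cmprh}\,F))\circ m_w)$ is inhabited.
   Context: Setting: intensional Martin-Löf type theory with $\Pi$-types, record types and a universe $\mathsf U$ closed under $\Pi$ and containing intensional $\Sigma$-types, identity types, unit type, W-types and dependent W-types; propositions-as-types. For a W-type with constructor $\mathsf{sup}$, $\mathsf n,\mathsf b$ are node and branch functions. $\mathsf{DW}_{I,X,Y,d}:I\to\mathsf U$ denotes the dependent W-type: the inductive family with constructor $\mathsf{dsup}\,i\,x\,f:\mathsf{DW}\,i$ for $x:X\,i$ and $f:\prod_{y:Y\,i\,x}\mathsf{DW}(d\,i\,x\,y)$. A setoid $X$: type $X_0:\mathsf U$ with relation $\approx_X$ and proofs of reflexivity, symmetry, transitivity; $x:X$ means $x:X_0$. Extensional function $f:X\Rightarrow Y$: $f_0:X_0\to Y_0$ with a proof that it preserves $\approx$; $X\Rightarrow Y$ is a setoid with pointwise equality; $\circ$ is composition. A setoid family $B$ over setoid $A$: setoids $B\,a$ and transports $B_\alpha:B\,a\Rightarrow B\,a'$ for $\alpha:a\approx_Aa'$, functorial up to $\approx$, with $B_\alpha\approx B_{\alpha'}$ for all $\alpha,\alpha'$. Write $b\approx_\alpha b'$ for $B_\alpha b\approx b'$. $P_BX$: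 setoid with underlying type $\sum_{a:A}(B\,a\Rightarrow X)$ and $(a,k)\approx(a',k'):=\sum_{\alpha:a\approx a'}k\approx k'\circ B_\alpha$. A $P_B$-algebra is a setoid $C$ with extensional $a_C:P_BC\Rightarrow C$. $W$: with $A_0,B_0$ underlying types and $\mathsf W:=\mathsf W(A_0,B_0)$, $\approx^Bw\,w':=\mathsf{DW}_{I,X,Y,d}(w,w')$ with $I:=\mathsf W\times\mathsf W$, $X(w,w'):=\mathsf nw\approx_A\mathsf nw'$, $Y(w,w')\alpha:=\sum_{b,b'}b\approx_\alpha b'$, $d(w,w')\alpha(b,b',\beta):=(\mathsf bwb,\mathsf bw'b')$. $W$: underlying type $\sum_{w:\mathsf W}\approx^Bw\,w$, $(w,\_)\approx_W(w',\_):=\approx^Bw\,w'$. $\mathsf n$, $\mathsf b$ induce extensional $\mathsf n:W\Rightarrow A$ and $\mathsf b\,w:B(\mathsf nw)\Rightarrow W$; for $\gamma:w\approx_Ww'$, $\mathsf n^\ast\gamma$ is extensionality of $\mathsf n$ applied to $\gamma$. $\mathsf{ImS}\,w$ (for $w:W$): setoid with underlying type $B_0(\mathsf nw)$ and $b\approx b':=\mathsf bwb\approx_W\mathsf bwb'$; transport $\mathsf{ImS}_\gamma s:=B_{\mathsf n^\ast\gamma}s$. $e_w:B(\mathsf nw)\Rightarrow\mathsf{ImS}\,w$ has identity underlying function; $m_w:\mathsf{ImS}\,w\Rightarrow W$ has the underlying function of $\mathsf b\,w$. A family $F:\prod_{s:\mathsf{ImS}w}\mathsf{ImS}(\mathsf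 bws)\Rightarrow C$ is coherent if $F\,s\approx(F\,s')\circ\mathsf{ImS}_\sigma$ for all $\sigma:s\approx s'$; $\mathsf{CohMaps}\,w$ is the setoid of coherent families with pointwise equality. For $F:\mathsf{CohMaps}\,w$, $\mathsf{recst}\,w\,F:\mathsf{ImS}\,w\Rightarrow C$ is the extensional function $s\mapsto a_C(\mathsf n(\mathsf bws),(F\,s)\circ e_{\mathsf bws})$. For $k:\mathsf{ImS}\,w\Rightarrow C$, $\mathsf{RecDef}\,w\,k:=\mathsf{DW}_{I',X',Y',d'}(w,k)$ with $I':=\sum_{w:W}(\mathsf{ImS}w\Rightarrow C)$, $X'(w,k):=\sum_{F:\mathsf{CohMaps}w}k\approx\mathsf{recst}\,w\,F$, $Y'(w,k)(F,\_):=$ underlying type of $\mathsf{ImS}\,w$, $d'(w,k)(F,\_)s:=(\mathsf bws,F\,s)$; $k$ is recursively defined when $\mathsf{RecDef}\,w\,k$ is inhabited. $\mathsf{RFam}$: setoid with underlying type $\sum_{F:\prod_{w:W}\mathsf{ImS}w\Rightarrow C}\prod_w\mathsf{RecDef}\,w\,(F\,w)$ and pointwise equality of the first components; an element is written $F$ with its proof left implicit. For $F:\mathsf{RFam}$, $\mathsf{cmprh}\,F:W\Rightarrow P_BC$ is the extensional function $w\mapsto(\mathsf n\,w,(F\,w)\circ e_w)$ (extensional since $F\,w\approx(F\,w')\circ\mathsf{ImS}_\gamma$ for $\gamma:w\approx_Ww'$). *)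

(* Proof-relevant setoids over Type (propositions-as-types). *)

Record Setoid := mkSetoid {
  car :> Type;
  eqv : car -> car -> Type;
  eqv_refl : forall x, eqv x x;
  eqv_sym : forall x y, eqv x y -> eqv y x;
  eqv_trans : forall x y z, eqv x y -> eqv y z -> eqv x z }.
Arguments eqv {s} x y.
Arguments eqv_refl {s} x.
Arguments eqv_sym {s x y} _.
Arguments eqv_trans {s x y z} _ _.

Record ExtFun (X Y : Setoid) := mkExtFun {
  ap :> car X -> car Y;
  ap_ext : forall x x', eqv x x' -> eqv (ap x) (ap x') }.
Arguments mkExtFun {X Y} _ _.
Arguments ap {X Y} _ _.
Arguments ap_ext {X Y} _ {x x'} _.

Definition FunS (X Y : Setoid) : Setoid.
Proof.
  refine (mkSetoid (ExtFun X Y) (fun f g => forall x, eqv (f x) (g x)) _ _ _).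
  - intros f x; apply eqv_refl.
  - intros f g H x; apply eqv_sym, H.
  - intros f g h H1 H2 x; exact (eqv_trans (H1 x) (H2 x)).
Defined.

Definition comp {X Y Z : Setoid} (g : ExtFun Y Z) (f : ExtFun X Y) : ExtFun X Z :=
  mkExtFun (fun x => g (f x)) (fun x x' e => ap_ext g (ap_ext f e)).

Record SetoidFam (A : Setoid) := mkSetoidFam {
  fam :> car A -> Setoid;
  tr : forall a a' : car A, eqv a a' -> ExtFun (fam a) (fam a');
  tr_refl : forall a (b : fam a), eqv (tr a a (eqv_refl a) b) b;
  tr_trans : forall a a' a'' (al : eqv a a') (al' : eqv a' a'') (b : fam a),
      eqv (tr a a'' (eqv_trans al al') b) (tr a' a'' al' (tr a a' al b));
  tr_irr : forall a a' (al al' : eqv a a') (b : fam a), eqv (tr a a' al b) (tr a a' al' b) }.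
Arguments fam {A} s _.
Arguments tr {A} s {a a'} _.
Arguments tr_refl {A} s {a} b.
Arguments tr_trans {A} s {a a' a''} al al' b.
Arguments tr_irr {A} s {a a'} al al' b.

Section FamFacts.
Context {A : Setoid} (B : SetoidFam A).

Definition tr_loop {a : car A} (al : eqv a a) (b : B a) : eqv (tr B al b) b :=
  eqv_trans (tr_irr B al (eqv_refl a) b) (tr_refl B b).

Definition tr_inv {a a' : car A} (al : eqv a a') (b' : B a') :
  eqv (tr B al (tr B (eqv_sym al) b')) b' :=
  eqv_trans (eqv_sym (tr_trans B (eqv_sym al) al b')) (tr_loop _ b').
End FamFacts.

Definition PB {A : Setoid} (B : SetoidFam A) (X : Setoid) : Setoid.
Proof.
  refine (mkSetoid { a : car A & ExtFun (B a) X }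
    (fun p q => { al : eqv (projT1 p) (projT1 q) &
                  eqv (s := FunS _ _) (projT2 p) (comp (projT2 q) (tr B al)) }) _ _ _).
  - intros [a k]. exists (eqv_refl a). intro b; simpl.
    apply ap_ext. apply eqv_sym, tr_refl.
  - intros [a k] [a' k'] [al H]; simpl in *. exists (eqv_sym al). intro b'; simpl.
    refine (eqv_trans (ap_ext k' (eqv_sym (tr_inv B al b'))) _).
    apply eqv_sym, H.
  - intros [a k] [a' k'] [a'' k''] [al H] [al' H']; simpl in *.
    exists (eqv_trans al al'). intro b; simpl.
    refine (eqv_trans (H b) _). refine (eqv_trans (H' _) _).
    apply ap_ext. apply eqv_sym, tr_trans.
Defined.

Inductive Wt (A0 : Type) (B0 : A0 -> Type) : Type :=
  sup : forall a : A0, (B0 a -> Wt A0 B0) -> Wt A0 B0.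
Arguments sup {A0 B0} a f.

Definition nd {A0 B0} (w : Wt A0 B0) : A0 := match w with sup a _ => a end.
Definition br {A0 B0} (w : Wt A0 B0) : B0 (nd w) -> Wt A0 B0 :=
  match w with sup _ f => f end.

Inductive DW (I : Type) (X : I -> Type) (Y : forall i, X i -> Type)
    (d : forall i (x : X i), Y i x -> I) : I -> Type :=
  dsup : forall i (x : X i), (forall y : Y i x, DW I X Y d (d i x y)) -> DW I X Y d i.
Arguments dsup {I X Y d} i x f.

Definition dnode {I X Y d} {i : I} (t : @DW I X Y d i) : X i :=
  match t with dsup _ x _ => x end.
Definition dchild {I X Y d} {i : I} (t : @DW I X Y d i) :
  forall y : Y i (dnode t), DW I X Y d (d i (dnode t) y) :=
  match t with dsup _ _ f => f end.

Section WSetoid.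
Context {A : Setoid} (B : SetoidFam A).

Definition WB := Wt (car A) (fun a => car (B a)).

Definition XB (i : WB * WB) : Type := eqv (nd (fst i)) (nd (snd i)).
Definition YB (i : WB * WB) (al : XB i) : Type :=
  { b : car (B (nd (fst i))) & { b' : car (B (nd (snd i))) & eqv (tr B al b) b' } }.
Definition dB (i : WB * WB) (al : XB i) (y : YB i al) : WB * WB :=
  (br (fst i) (projT1 y), br (snd i) (projT1 (projT2 y))).

Definition eqB (w w' : WB) : Type := DW (WB * WB) XB YB dB (w, w').

Fixpoint eqB_sym_aux (i : WB * WB) (t : DW _ XB YB dB i) {struct t} :
  DW _ XB YB dB (snd i, fst i) :=
  match t in DW _ _ _ _ i return DW _ XB YB dB (snd i, fst i) with
  | dsup i al f =>
      dsup (snd i, fst i) (eqv_sym al)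
        (fun y => let '(existT _ b' (existT _ b be)) := y in
           eqB_sym_aux _ (f (existT _ b (existT _ b'
              (eqv_trans (ap_ext (tr B al) (eqv_sym be)) (tr_inv B al b'))))))
  end.

Definition eqB_sym (w w' : WB) (t : eqB w w') : eqB w' w := eqB_sym_aux (w, w') t.

Fixpoint eqB_trans_aux (i : WB * WB) (t : DW _ XB YB dB i) {struct t} :
  forall w'' : WB, eqB (snd i) w'' -> eqB (fst i) w'' :=
  match t in DW _ _ _ _ i return forall w'' : WB, eqB (snd i) w'' -> eqB (fst i) w'' with
  | dsup i al f => fun w'' u =>
      dsup (fst i, w'') (eqv_trans al (dnode u))
        (fun y => let '(existT _ b (existT _ b'' be)) := y in
           eqB_trans_aux _ (f (existT _ b (existT _ (tr B al b) (eqv_refl _))))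
             _ (dchild u (existT _ (tr B al b) (existT _ b''
                  (eqv_trans (eqv_sym (tr_trans B al (dnode u) b)) be)))))
  end.

Definition eqB_trans (w w' w'' : WB) (t : eqB w w') (u : eqB w' w'') : eqB w w'' :=
  eqB_trans_aux (w, w') t w'' u.

Definition W : Setoid.
Proof.
  refine (mkSetoid { w : WB & eqB w w } (fun p q => eqB (projT1 p) (projT1 q)) _ _ _).
  - intros [w p]; exact p.
  - intros p q t; exact (eqB_sym _ _ t).
  - intros p q r t u; exact (eqB_trans _ _ _ t u).
Defined.

Definition nW : ExtFun W A :=
  mkExtFun (X := W) (Y := A) (fun x : car W => nd (projT1 x)) (fun x x' g => dnode g).

Definition nstar {x x' : car W} (g : eqv x x') : eqv (nW x) (nW x') := ap_ext nW g.

Definition bW_fun (x : car W) (b : car (B (nW x))) : car W :=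
  existT _ (br (projT1 x) b)
    (dchild (projT2 x) (existT _ b (existT _ b (tr_loop B (dnode (projT2 x)) b)))).

Definition bW (x : car W) : ExtFun (B (nW x)) W :=
  mkExtFun (bW_fun x)
    (fun b b' e => dchild (projT2 x)
        (existT _ b (existT _ b' (eqv_trans (tr_loop B (dnode (projT2 x)) b) e)))).

End WSetoid.

Section Rec.
Context {A : Setoid} (B : SetoidFam A) (C : Setoid) (aC : ExtFun (PB B C) C).

Definition ImS (x : car (W B)) : Setoid.
Proof.
  refine (mkSetoid (car (B (nW B x)))
            (fun b b' => eqv (bW B x b) (bW B x b')) _ _ _).
  - intro b; apply eqv_refl.
  - intros b b' e; exact (eqv_sym e).
  - intros b b' b'' e e'; exact (eqv_trans e e').
Defined.

Definition ImS_tr {x x' : car (W B)} (g : eqv x x') : ExtFun (ImS x) (ImS x').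
Proof.
  refine (mkExtFun (X := ImS x) (Y := ImS x') (fun s => tr B (nstar B g) s) _).
  intros s s' e; simpl in *.
  pose (ds := dchild g (existT _ s (existT _ (tr B (dnode g) s) (eqv_refl _)))).
  pose (ds' := dchild g (existT _ s' (existT _ (tr B (dnode g) s') (eqv_refl _)))).
  exact (eqB_trans B _ _ _ (eqB_sym B _ _ ds) (eqB_trans B _ _ _ e ds')).
Defined.

Definition e_ (x : car (W B)) : ExtFun (B (nW B x)) (ImS x) :=
  mkExtFun (X := B (nW B x)) (Y := ImS x) (fun b => b) (fun b b' e => ap_ext (bW B x) e).

Definition m_ (x : car (W B)) : ExtFun (ImS x) (W B) :=
  mkExtFun (X := ImS x) (Y := W B) (fun s => bW B x s) (fun s s' e => e).

Definition coherent (x : car (W B))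
    (F : forall s : car (ImS x), ExtFun (ImS (bW B x s)) C) : Type :=
  forall (s s' : car (ImS x)) (sg : eqv s s'),
    eqv (s := FunS _ _) (F s) (comp (F s') (ImS_tr sg)).

Definition CohMaps (x : car (W B)) : Setoid.
Proof.
  refine (mkSetoid
    { F : forall s : car (ImS x), ExtFun (ImS (bW B x s)) C & coherent x F }
    (fun F G => forall s, eqv (s := FunS _ _) (projT1 F s) (projT1 G s)) _ _ _).
  - intros F s; apply eqv_refl.
  - intros F G H s; exact (eqv_sym (H s)).
  - intros F G K H1 H2 s; exact (eqv_trans (H1 s) (H2 s)).
Defined.

Definition recst (x : car (W B)) (F : car (CohMaps x)) : ExtFun (ImS x) C.
Proof.
  refine (mkExtFun (X := ImS x) (Y := C)
    (fun s => aC (existT _ (nW B (bW B x s)) (comp (projT1 F s) (e_ (bW B x s))))) _).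
  intros s s' sg. apply (ap_ext aC). simpl.
  exists (nstar B sg). intro t. simpl.
  exact (projT2 F s s' sg t).
Defined.

Definition I' : Type := { x : car (W B) & ExtFun (ImS x) C }.
Definition X' (i : I') : Type :=
  { F : car (CohMaps (projT1 i)) & eqv (s := FunS _ _) (projT2 i) (recst (projT1 i) F) }.
Definition Y' (i : I') (p : X' i) : Type := car (ImS (projT1 i)).
Definition d' (i : I') (p : X' i) (s : Y' i p) : I' :=
  existT _ (bW B (projT1 i) s) (projT1 (projT1 p) s).

Definition RecDef (x : car (W B)) (k : ExtFun (ImS x) C) : Type :=
  DW I' X' Y' d' (existT _ x k).

Definition RFam : Setoid.
Proof.
  refine (mkSetoid
    { F : forall x : car (W B), ExtFun (ImS x) C & forall x, RecDef x (F x) }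
    (fun F G => forall x, eqv (s := FunS _ _) (projT1 F x) (projT1 G x)) _ _ _).
  - intros F x; apply eqv_refl.
  - intros F G H x; exact (eqv_sym (H x)).
  - intros F G K H1 H2 x; exact (eqv_trans (H1 x) (H2 x)).
Defined.

Fixpoint rfam_ext_aux (i : WB B * WB B) (g : DW _ (XB B) (YB B) (dB B) i) {struct g} :
  forall (x x' : car (W B)), (projT1 x, projT1 x') = i ->
  forall (k : ExtFun (ImS x) C) (k' : ExtFun (ImS x') C),
  RecDef x k -> RecDef x' k' ->
  forall (al : eqv (nW B x) (nW B x')) (s : car (ImS x)), eqv (k s) (k' (tr B al s)).
Proof.
  destruct g as [i al0 f].
  intros x x' E k k' r r' al s.
  destruct E.
  pose (p := dnode r). pose (p' := dnode r').
  refine (eqv_trans (projT2 p s) _).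
  refine (eqv_trans _ (eqv_sym (projT2 p' (tr B al s)))).
  simpl. apply (ap_ext aC).
  pose (dl := (f (existT _ s (existT _ (tr B al s) (tr_irr B al0 al s)))
               : eqB B (projT1 (bW B x s)) (projT1 (bW B x' (tr B al s))))).
  exists (dnode dl). intro t. simpl.
  exact (rfam_ext_aux _ dl (bW B x s) (bW B x' (tr B al s)) eq_refl
           _ _ (dchild r s) (dchild r' (tr B al s)) (dnode dl) t).
Defined.

Definition rfam_ext (F : car RFam) (x x' : car (W B)) (g : eqv x x') :
  eqv (s := FunS _ _) (projT1 F x) (comp (projT1 F x') (ImS_tr g)) :=
  fun s => rfam_ext_aux (projT1 x, projT1 x') g x x' eq_refl _ _
             (projT2 F x) (projT2 F x') (nstar B g) s.

Definition cmprh (F : car RFam) : ExtFun (W B) (PB B C).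
Proof.
  refine (mkExtFun (X := W B) (Y := PB B C) (fun x => existT _ (nW B x) (comp (projT1 F x) (e_ x))) _).
  intros x x' g. exists (nstar B g). intro b. exact (rfam_ext F x x' g b).
Defined.

End Rec.


(* One unfolding of RecDef suffices: the values of F at the immediate subtrees
   of w form a coherent family because F is extensional (rfam_ext), the given
   map is pointwise the recursion step recst applied to that family, and each
   of those values is recursively defined by the second component of F. *)

Section RecursivelyDefined.
Context {A : Setoid} (B : SetoidFam A) (C : Setoid) (aC : ExtFun (PB B C) C).

Definition RecDef_intro (w : car (W B)) (k : ExtFun (ImS B w) C)
    (F : car (CohMaps B C w)) (kF : eqv (s := FunS _ _) k (recst B C aC w F))
    (recF : forall s, RecDef B C aC (bW B w s) (projT1 F s)) :
  RecDef B C aC w k :=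
  dsup (existT _ w k) (existT _ F kF) recF.

Definition RFam_subtrees (F : car (RFam B C aC)) (w : car (W B)) :
  car (CohMaps B C w) :=
  existT _ (fun s => projT1 F (bW B w s))
    (fun s s' sg => rfam_ext B C aC F (bW B w s) (bW B w s') sg).

Lemma cmprh_m_eqv_recst (F : car (RFam B C aC)) (w : car (W B)) :
  eqv (s := FunS _ _) (comp (comp aC (cmprh B C aC F)) (m_ B w))
      (recst B C aC w (RFam_subtrees F w)).
Proof. intro s; apply eqv_refl. Defined.

End RecursivelyDefined.

Theorem lemma3p15 (A : Setoid) (B : SetoidFam A) (C : Setoid)
    (aC : ExtFun (PB B C) C) (F : car (RFam B C aC)) (w : car (W B)) :
  RecDef B C aC w (comp (comp aC (cmprh B C aC F)) (m_ B w)).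
Proof.
  apply (RecDef_intro B C aC w _ (RFam_subtrees B C aC F w)).
  - exact (cmprh_m_eqv_recst B C aC F w).
  - intro s; exact (projT2 F (bW B w s)).
Qed.
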